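(* $\mathcal M_{\max}$ is a well-defined functor from $\mathbf{Ord}$ to $\mathbf{Ord}$: for every monotone $f:X\to Y$, $\mathcal M_{\max}(f)$ is a monotone map $(\mathcal M(X),\le_{\mathcal M(X)})\to(\mathcal M(Y),\le_{\mathcal M(Y)})$, $\mathcal M_{\max}(\mathrm{id}_X)=\mathrm{id}$, and $\mathcal M_{\max}(g\circ f)=\mathcal M_{\max}(g)\circ\mathcal M_{\max}(f)$ for monotone $f:X\to Y$, $g:Y\to Z$.
   Context: $\mathbf{Ord}$ is the category of partially ordered sets and monotone maps. For a poset $(X,\le_X)$, $\mathcal M(X)$ is the set of nonempty finite subsets of $X$ whose elements are pairwise incomparable, ordered by $S\le_{\mathcal M(X)}T$ iff every $x\in S$ has some $y\in T$ with $x\le_X y$. For $S\subseteq X$, $S^{\circ}$ denotes the set of maximal elements of $S$. The maximal functor is given by $\mathcal M_{\max}(X)=(\mathcal M(X),\le_{\mathcal M(X)})$ and $\mathcal M_{\max}(f)(S)=(f(S))^{\circ}$ for monotone $f:X\to Y$. *)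

From mathcomp Require Import all_boot all_order.
From mathcomp Require Import boolp classical_sets cardinality.
Set Implicit Arguments. Unset Strict Implicit. Unset Printing Implicit Defensive.
Import Order.POrderTheory.
Local Open Scope order_scope.

Definition antichain {d} {X : porderType d} (S : set X) : Prop :=
  forall x y, S x -> S y -> x <> y -> ~~ (x >=< y).

Definition inM {d} {X : porderType d} (S : set X) : Prop :=
  S <> set0 /\ finite_set S /\ antichain S.

Definition leM {d} {X : porderType d} (S T : set X) : Prop :=
  forall x, S x -> exists y, T y /\ x <= y.

Definition maxset {d} {X : porderType d} (S : set X) : set X :=
  fun x => S x /\ (forall y, S y -> x <= y -> y = x).

Definition Mmax {d1 d2} {X : porderType d1} {Y : porderType d2}
  (f : X -> Y) (S : set X) : set Y :=
  maxset (image S f).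

(** The functor laws reduce to one observation: in a finite poset every element
    lies below a maximal one, i.e. a finite set [A] is [leM]-below its set of
    maximal elements [A°].  A set and any cofinal subset of it have the same
    maximal elements, and for monotone [g] the image [g(A°)] is cofinal in
    [g(A)]; hence [(g(A°))° = (g(A))°], which is the composition law.
    Monotonicity follows by chaining [f(S)° <= f(S) <= f(T) <= f(T)°]. *)
From mathcomp Require Import all_boot all_order.
From mathcomp Require Import boolp classical_sets cardinality.
Import Order.POrderTheory.
Local Open Scope order_scope.
Local Open Scope classical_set_scope.

Lemma count_lt_subpred (T : eqType) (P Q : pred T) (s : seq T) (y : T) :
  subpred P Q -> y \in s -> Q y -> ~~ P y -> (count P s < count Q s)%N.
Proof.
move=> sPQ + Qy nPy; elim: s => //= x s IHs; rewrite inE => /predU1P[<-|ys].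
  by rewrite (negbTE nPy) Qy ltnS sub_count.
rewrite -addnS; apply: leq_add (IHs ys).
by case: (boolP (P x)) => // /sPQ ->.
Qed.

Section MaximalElements.
Context {d : Order.disp_t} {X : porderType d}.
Implicit Types (A B C : set X).

Lemma leM_trans B A C : leM A B -> leM B C -> leM A C.
Proof.
move=> AB BC x /AB[y [By xy]]; have [z [Cz yz]] := BC y By.
by exists z; split=> //; apply: le_trans yz.
Qed.

Lemma subset_leM A B : A `<=` B -> leM A B.
Proof. by move=> AB x /AB Bx; exists x. Qed.

Lemma maxset_sub A : maxset A `<=` A.
Proof. by move=> x []. Qed.

(* Induction on the number of elements of [A] strictly above [a]. *)
Lemma leM_maxset {A} : finite_set A -> leM A (maxset A).
Proof.
move=> /finite_seqP[s ->] a; have [n] := ubnP (count (fun z => a < z) s).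
elim: n a => // n IHn a; rewrite ltnS => cnt_a sa.
have [[y sy ay]|no_above] := pselect (exists2 y, y \in s & a < y).
  have cnt_y : (count (fun z => (y < z)%O) s < count (fun z => (a < z)%O) s)%N.
    by apply: (@count_lt_subpred _ _ _ _ y) => // [z|]; [apply: lt_trans | rewrite ltxx].
  have [b [mb yb]] := IHn y (leq_trans cnt_y cnt_a) sy.
  by exists b; split=> //; apply: le_trans (ltW ay) yb.
exists a; split=> //; split=> // y sy ay.
apply: contra_notP no_above => ya; exists y => //.
by rewrite lt_def ay andbT; apply/eqP.
Qed.

Lemma maxset_cofinal A B : B `<=` A -> leM A B -> maxset A = maxset B.
Proof.
move=> BA AB; apply/seteqP; split=> x [Ax x_max].
- have [y [By xy]] := AB x Ax.
  have yx := x_max y (BA y By) xy; rewrite yx in By.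
  by split=> // z /BA; apply: x_max.
- split; first exact: BA.
  move=> y Ay xy; have [z [Bz yz]] := AB y Ay.
  have zx := x_max z Bz (le_trans xy yz).
  by apply/eqP; rewrite eq_le xy andbT -zx.
Qed.

Lemma maxset_antichain A : antichain (maxset A).
Proof.
move=> x y [Ax x_max] [Ay y_max] nxy; apply/negP => /orP[xy|yx].
- by apply: nxy; rewrite (x_max y Ay xy).
- by apply: nxy; rewrite (y_max x Ax yx).
Qed.

Lemma maxset_antichain_id A : antichain A -> maxset A = A.
Proof.
move=> antiA; apply/seteqP; split; first exact: maxset_sub.
move=> x Ax; split=> // y Ay xy; have [//|nyx] := pselect (y = x).
by have := antiA x y Ax Ay (nesym nyx); rewrite /Order.comparable xy.
Qed.

Lemma inM_maxset A : A <> set0 -> finite_set A -> inM (maxset A).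
Proof.
move=> /eqP/set0P[a Aa] finA; split; last split.
- by have [b [mb _]] := leM_maxset finA a Aa; apply/eqP/set0P; exists b.
- exact: sub_finite_set (@maxset_sub A) finA.
- exact: maxset_antichain.
Qed.

End MaximalElements.

Section MonotoneImage.
Context {d1 d2 : Order.disp_t} {X : porderType d1} {Y : porderType d2}.
Variable f : X -> Y.
Hypothesis f_homo : {homo f : x y / x <= y}.

Lemma leM_image (A B : set X) : leM A B -> leM (f @` A) (f @` B).
Proof.
move=> AB _ [x Ax <-]; have [y [By xy]] := AB x Ax.
by exists (f y); split; [exists y | apply: f_homo].
Qed.

Lemma maxset_image_maxset (A : set X) :
  finite_set A -> maxset (f @` maxset A) = maxset (f @` A).
Proof.
move=> finA; apply/esym/maxset_cofinal; first exact: image_subset (@maxset_sub _ _ A).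
exact: leM_image (leM_maxset finA).
Qed.

Lemma inM_Mmax (S : set X) : inM S -> inM (Mmax f S).
Proof.
move=> [S_neq0 [finS _]]; apply: inM_maxset; last exact: finite_image.
exact: contra_not (@image_set0_set0 _ _ S f) S_neq0.
Qed.

Lemma leM_Mmax (S T : set X) : inM T -> leM S T -> leM (Mmax f S) (Mmax f T).
Proof.
move=> [_ [finT _]] ST; apply: (leM_trans (f @` S)).
  exact: subset_leM (@maxset_sub _ _ _).
apply: (leM_trans (f @` T)); first exact: leM_image.
exact: leM_maxset (finite_image f finT).
Qed.

End MonotoneImage.

Lemma Mmax_id {d : Order.disp_t} {X : porderType d} (S : set X) :
  inM S -> Mmax id S = S.
Proof. by move=> [_ [_ antiS]]; rewrite /Mmax image_id maxset_antichain_id. Qed.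

Lemma Mmax_comp {d1 d2 d3 : Order.disp_t} {X : porderType d1}
    {Y : porderType d2} {Z : porderType d3} (f : X -> Y) (g : Y -> Z) (S : set X) :
  {homo g : x y / x <= y} -> inM S -> Mmax (g \o f) S = Mmax g (Mmax f S).
Proof.
move=> g_homo [_ [finS _]].
by rewrite /Mmax maxset_image_maxset ?image_comp //; apply: finite_image.
Qed.

Theorem propositionD10 :
  (* well-defined and monotone on morphisms *)
  (forall (d1 d2 : Order.disp_t) (X : porderType d1) (Y : porderType d2)
          (f : X -> Y), {homo f : x y / x <= y} ->
     (forall S : set X, inM S -> inM (Mmax f S)) /\
     (forall S T : set X, inM S -> inM T -> leM S T -> leM (Mmax f S) (Mmax f T))) /\
  (* preserves identities *)
  (forall (d : Order.disp_t) (X : porderType d) (S : set X),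
     inM S -> Mmax (@id X) S = S) /\
  (* preserves composition *)
  (forall (d1 d2 d3 : Order.disp_t) (X : porderType d1) (Y : porderType d2)
          (Z : porderType d3) (f : X -> Y) (g : Y -> Z),
     {homo f : x y / x <= y} -> {homo g : x y / x <= y} ->
     forall S : set X, inM S -> Mmax (g \o f) S = Mmax g (Mmax f S)).
Proof.
split; [|split].
- move=> d1 d2 X Y f f_homo; split; first exact: inM_Mmax.
  by move=> S T _; apply: leM_Mmax.
- exact: @Mmax_id.
- by move=> d1 d2 d3 X Y Z f g _ g_homo S; apply: Mmax_comp.
Qed.
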